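(* Let $D$ be a database, $R$ a regular expression and $\mathcal{A}$ any automaton with $L(R)=L(\mathcal{A})$. Let $s,t$ be vertices of $D$ and let $P$ be the set of walks of $\llbracket\mathcal{A}\rrbracket_W(D)$ going from $s$ to $t$. If $w\in P$ has minimal length in $P$, then $w\in\llbracket R\rrbracket_{BT}(D)$.
   Context: A database is $D=(\Sigma,V,E,\mathrm{src},\mathrm{tgt},\mathrm{lbl})$ with finite alphabet $\Sigma$, finite vertex set $V$, finite edge set $E$, $\mathrm{src},\mathrm{tgt}:E\to V$, $\mathrm{lbl}:E\to2^\Sigma$; a walk is $(n_0,e_0,\dots,e_{k-1},n_k)$ with $\mathrm{src}(e_i)=n_i$, $\mathrm{tgt}(e_i)=n_{i+1}$, of length $k$, with $\mathrm{lbl}(w)=\{u_0\cdots u_{k-1}:u_i\in\mathrm{lbl}(e_i)\}$. For an automaton $\mathcal{A}$, the walk semantics $\llbracket\mathcal{A}\rrbracket_W(D)$ consists of the walks $w$ of $D$ with $\mathrm{lbl}(w)\cap L(\mathcal{A})\ne\emptyset$ (as projections of runs of the product $D\times\mathcal{A}$). Regular expressions: $R::=\varepsilon\mid a\mid R^*\mid R\cdot R\mid R+R$. A linearisation $R'$ of $R$ replaces each atom occurrence by a distinct fresh symbol (position) of an alphabet $\Gamma$; $\overline\alpha\in\Sigma$ denotes the original letter of position $\alpha$. A binding trail of $D$ matching $R$ is a sequence $(e_1,\alpha_1)\cdots(e_n,\alpha_n)\in(E\times\Gamma)^*$ with $e_1\cdots e_n$ a walk of $D$, $\overline{\alpha_1\cdots\alpha_n}\in\mathrm{lbl}(e_1\cdots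 e_n)$, $\alpha_1\cdots\alpha_n\in L(R')$, and the pairs $(e_i,\alpha_i)$ pairwise distinct. $\llbracket R\rrbracket_{BT}(D)$ is the bag of the walks $e_1\cdots e_n$ underlying binding trails of $D$ matching $R$. *)

From mathcomp Require Import all_boot.
Set Implicit Arguments. Unset Strict Implicit. Unset Printing Implicit Defensive.

Record database (Sigma : finType) := Database {
  vertex : finType;
  edge : finType;
  src : edge -> vertex;
  tgt : edge -> vertex;
  lbl : edge -> {set Sigma} }.

(* A walk (n0, e0, ..., e_{k-1}, n_k) is represented by its start vertex n0
   and its edge sequence [e0; ...; e_{k-1}] (the other vertices are determined). *)
Fixpoint is_walk_from (Sigma : finType) (D : database Sigma)
    (n0 : vertex D) (es : seq (edge D)) : bool :=
  if es is e :: es' then (src e == n0) && is_walk_from (tgt e) es' else true.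

Definition walk_end (Sigma : finType) (D : database Sigma)
    (n0 : vertex D) (es : seq (edge D)) : vertex D := last n0 (map (@tgt _ D) es).

Definition in_walk_lbl (Sigma : finType) (D : database Sigma)
    (es : seq (edge D)) (u : seq Sigma) : bool :=
  all2 (fun e a => a \in lbl e) es u.

Record automaton (Sigma : finType) := Automaton {
  state : finType;
  init : {set state};
  final : {set state};
  trans : state -> Sigma -> {set state} }.

Fixpoint accepts_from (Sigma : finType) (A : automaton Sigma)
    (q : state A) (w : seq Sigma) : bool :=
  if w is a :: w' then [exists q', (q' \in trans q a) && accepts_from q' w']
  else q \in final A.

Definition aut_lang (Sigma : finType) (A : automaton Sigma) (w : seq Sigma) : Prop :=
  exists2 q0, q0 \in init A & accepts_from q0 w.

Definition in_walk_sem (Sigma : finType) (A : automaton Sigma) (D : database Sigma)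
    (n0 : vertex D) (es : seq (edge D)) : Prop :=
  is_walk_from n0 es /\ exists u, in_walk_lbl es u /\ aut_lang A u.

Inductive regex (A : Type) :=
  | Eps
  | Atom of A
  | Star of regex A
  | Cat of regex A & regex A
  | Alt of regex A & regex A.
Arguments Eps {A}.

Inductive matches {A : Type} : regex A -> seq A -> Prop :=
  | m_eps : matches Eps [::]
  | m_atom a : matches (Atom a) [:: a]
  | m_cat r1 r2 w1 w2 : matches r1 w1 -> matches r2 w2 -> matches (Cat r1 r2) (w1 ++ w2)
  | m_alt_l r1 r2 w : matches r1 w -> matches (Alt r1 r2) w
  | m_alt_r r1 r2 w : matches r2 w -> matches (Alt r1 r2) w
  | m_star_nil r : matches (Star r) [::]
  | m_star_cons r w1 w2 : matches r w1 -> matches (Star r) w2 -> matches (Star r) (w1 ++ w2).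

Fixpoint atoms {A : Type} (R : regex A) : seq A :=
  match R with
  | Eps => [::]
  | Atom a => [:: a]
  | Star r => atoms r
  | Cat r1 r2 => atoms r1 ++ atoms r2
  | Alt r1 r2 => atoms r1 ++ atoms r2
  end.

(* Linearisation: the i-th atom occurrence (from left to right, counting from k)
   is replaced by the position i; positions are the alphabet Gamma = nat. *)
Fixpoint lin_from {A : Type} (k : nat) (R : regex A) : regex nat :=
  match R with
  | Eps => Eps
  | Atom _ => Atom k
  | Star r => Star (lin_from k r)
  | Cat r1 r2 => Cat (lin_from k r1) (lin_from (k + size (atoms r1)) r2)
  | Alt r1 r2 => Alt (lin_from k r1) (lin_from (k + size (atoms r1)) r2)
  end.

Definition linearise {A : Type} (R : regex A) : regex nat := lin_from 0 R.

Definition orig_letter {A : Type} (R : regex A) (alpha : nat) : option A :=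
  nth None (map Some (atoms R)) alpha.

(* (e_1,alpha_1)...(e_n,alpha_n), zipped from es and alphas, is a binding trail
   of D matching R, whose underlying walk starts at n0. *)
Definition binding_trail (Sigma : finType) (D : database Sigma) (R : regex Sigma)
    (n0 : vertex D) (es : seq (edge D)) (alphas : seq nat) : Prop :=
  [/\ size alphas = size es,
      is_walk_from n0 es,
      all2 (fun e alpha => if orig_letter R alpha is Some a then a \in lbl e else false)
           es alphas,
      matches (linearise R) alphas
    & uniq (zip es alphas)].

(* membership of the walk (n0, es) in (the support of the bag) [[R]]_BT(D) *)
Definition in_BT_sem (Sigma : finType) (D : database Sigma) (R : regex Sigma)
    (n0 : vertex D) (es : seq (edge D)) : Prop :=
  exists alphas, @binding_trail Sigma D R n0 es alphas.

From mathcomp Require Import all_boot.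
From mathcomp Require Import zify.
Set Implicit Arguments. Unset Strict Implicit. Unset Printing Implicit Defensive.

(* Take a word u in lbl(w) ∩ L(R) and a linearisation al of u matching R'.
   If two pairs (e_i, alpha_i) = (e_j, alpha_j) coincided with i < j, the
   loop e_i ... e_{j-1} could be cut: the shortened edge sequence is still a
   walk from s to t (it resumes with the same edge e_i), and the shortened
   word still matches R', because the linear expression R' denotes a local
   language (a word may jump from one occurrence of a position to another).
   Mapping positions back to letters gives a word of L(R) = L(A) labelling a
   shorter walk, contradicting minimality. *)

Lemma cat_eq_cat_cons (T : Type) (w1 w2 u v : seq T) (a : T) :
  w1 ++ w2 = u ++ a :: v ->
  (exists d, w1 = u ++ a :: d /\ v = d ++ w2) \/
  (exists c, u = w1 ++ c /\ w2 = c ++ a :: v).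
Proof.
elim: w1 u => [|x w1 IH] u /=; first by move=> ->; right; exists u.
case: u => [|y u] /= [-> E]; first by left; exists w1; rewrite E.
by case/IH: E => [[d [-> ->]] | [c [-> ->]]]; [left; exists d | right; exists c].
Qed.

Lemma cat_eq_map (X Y : Type) (f : X -> Y) (s1 s2 : seq Y) (xs : seq X) :
  s1 ++ s2 = map f xs ->
  exists xs1 xs2, [/\ xs = xs1 ++ xs2, s1 = map f xs1 & s2 = map f xs2].
Proof.
elim: s1 xs => [|y s1 IH] xs /=; first by exists [::], xs.
case: xs => [|x xs] //= [-> /IH [xs1 [xs2 [-> -> ->]]]].
by exists (x :: xs1), xs2.
Qed.

Lemma not_uniq_split (T : eqType) (s : seq T) : ~~ uniq s ->
  exists s1 x s2 s3, s = s1 ++ x :: s2 ++ x :: s3.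
Proof.
elim: s => [|y s IH] //=; rewrite negb_and negbK.
case/orP=> [/splitPr[s2 s3] | /IH[s1 [x [s2 [s3 ->]]]]].
  by exists [::], y, s2, s3.
by exists (y :: s1), x, s2, s3.
Qed.

Section Matching.
Variable T : Type.
Implicit Types (r : regex T) (w : seq T).

Lemma matches_eps_inv w : matches Eps w -> w = [::].
Proof. by move=> H; inversion H. Qed.

Lemma matches_atom_inv x w : matches (Atom x) w -> w = [:: x].
Proof. by move=> H; inversion H. Qed.

Lemma matches_cat_inv r1 r2 w : matches (Cat r1 r2) w ->
  exists w1 w2, [/\ w = w1 ++ w2, matches r1 w1 & matches r2 w2].
Proof. by move=> H; inversion H; exists w1, w2. Qed.

Lemma matches_alt_inv r1 r2 w : matches (Alt r1 r2) w -> matches r1 w \/ matches r2 w.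
Proof. by move=> H; inversion H; [left | right]. Qed.

Lemma matches_star_cat r w1 w2 :
  matches (Star r) w1 -> matches (Star r) w2 -> matches (Star r) (w1 ++ w2).
Proof.
move Er: (Star r) => r' H; elim: H Er => // r0 w3 w4 H3 _ _ IH Er H2.
by rewrite -catA; constructor => //; exact: IH.
Qed.

Lemma matches_star_occ r u a v : matches (Star r) (u ++ a :: v) ->
  exists p c d q, [/\ matches (Star r) p, matches r (c ++ a :: d),
                      matches (Star r) q, u = p ++ c & v = d ++ q].
Proof.
move Er: {1}(Star r) => r'; move Ew: (u ++ a :: v) => w H.
elim: H Er u v Ew => // [r0 _ [|? ?] ? // | r0 w1 w2 H1 _ H2 IH [Er] u v /esym E];
  subst r0.
case: (cat_eq_cat_cons E) => [[d [E1 ->]] | [c [-> E2]]].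
  by exists [::], u, d, w2; split => //; [constructor | rewrite -E1].
have [p [c' [d [q [Hp Hc Hq -> ->]]]]] := IH erefl _ _ (esym E2).
by exists (w1 ++ p), c', d, q; split; rewrite ?catA //; constructor.
Qed.

End Matching.

Section LinearExpressions.
Variable T : eqType.
Implicit Types (r : regex T) (w : seq T).

Lemma matches_atoms r w : matches r w -> {subset w <= atoms r}.
Proof.
elim=> //= [a | r1 r2 w1 w2 _ IH1 _ IH2 | r1 r2 w0 _ IH | r1 r2 w0 _ IH
            | r0 w1 w2 _ IH1 _ IH2] x.
- by [].
- by rewrite !mem_cat => /orP[/IH1 | /IH2] ->; rewrite ?orbT.
- by rewrite mem_cat => /IH ->.
- by rewrite mem_cat => /IH ->; rewrite orbT.
- by rewrite mem_cat => /orP[/IH1 | /IH2].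
Qed.

Lemma matches_disjoint r1 r2 w1 w2 a : uniq (atoms r1 ++ atoms r2) ->
  matches r1 w1 -> matches r2 w2 -> a \in w1 -> a \in w2 -> False.
Proof.
rewrite cat_uniq => /and3P[_ /hasPn disj _] H1 H2 /(matches_atoms H1) a1.
by move=> /(matches_atoms H2) /disj /=; rewrite a1.
Qed.

Lemma linear_matches_splice r a u1 v1 u2 v2 : uniq (atoms r) ->
  matches r (u1 ++ a :: v1) -> matches r (u2 ++ a :: v2) ->
  matches r (u1 ++ a :: v2).
Proof.
have in_a u v : a \in u ++ a :: v by rewrite mem_cat mem_head orbT.
elim: r u1 v1 u2 v2 => [|b|r IH|r1 IH1 r2 IH2|r1 IH1 r2 IH2] u1 v1 u2 v2 /= U.
- by move/matches_eps_inv; case: u1.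
- move=> H1 H2; move: (matches_atom_inv H1) (matches_atom_inv H2) => {H1 H2}.
  case: u1 => [|? []] //= [-> _]; case: u2 => [|? []] //= [->].
  by constructor.
- move=> H1 H2; have [p1 [c1 [d1 [q1 [Hp1 Hc1 _ -> _]]]]] := matches_star_occ H1.
  have [p2 [c2 [d2 [q2 [_ Hc2 Hq2 _ ->]]]]] := matches_star_occ H2.
  rewrite -catA -cat_cons [c1 ++ _]catA.
  by apply: matches_star_cat => //; constructor => //; exact: IH Hc1 Hc2.
- have [U1 U2] : uniq (atoms r1) /\ uniq (atoms r2).
    by move: (U); rewrite cat_uniq => /and3P[-> _ ->].
  case/matches_cat_inv=> [w1 [w2 [/esym E H1 H2]]].
  case/matches_cat_inv=> [w1' [w2' [/esym E' H1' H2']]].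
  case: (cat_eq_cat_cons E) => [[d [Ew1 Ev1]] | [c [Eu1 Ew2]]];
  case: (cat_eq_cat_cons E') => [[d' [Ew1' Ev2]] | [c' [Eu2 Ew2']]]; subst.
  + by rewrite -cat_cons catA; constructor => //; exact: IH1 H1 H1'.
  + by case: (matches_disjoint U H1 H2' (in_a _ _) (in_a _ _)).
  + by case: (matches_disjoint U H1' H2 (in_a _ _) (in_a _ _)).
  + by rewrite -catA; constructor => //; exact: IH2 H2 H2'.
- have [U1 U2] : uniq (atoms r1) /\ uniq (atoms r2).
    by move: (U); rewrite cat_uniq => /and3P[-> _ ->].
  case/matches_alt_inv=> H1; case/matches_alt_inv=> H2.
  + by apply: m_alt_l; exact: IH1 H1 H2.
  + by case: (matches_disjoint U H1 H2 (in_a _ _) (in_a _ _)).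
  + by case: (matches_disjoint U H2 H1 (in_a _ _) (in_a _ _)).
  + by apply: m_alt_r; exact: IH2 H1 H2.
Qed.

End LinearExpressions.

Section Linearisation.
Variable A : Type.
Implicit Types (r : regex A) (u : seq A) (al : seq nat).

Lemma atoms_lin_from r k : atoms (lin_from k r) = iota k (size (atoms r)).
Proof.
by elim: r k => [|a|r IH|r1 IH1 r2 IH2|r1 IH1 r2 IH2] k /=; rewrite ?IH ?IH1 ?IH2 ?size_cat ?iotaD.
Qed.

Lemma uniq_atoms_linearise r : uniq (atoms (linearise r)).
Proof. by rewrite atoms_lin_from iota_uniq. Qed.

Definition lin_letter r k x : option A := orig_letter r (x - k).

Lemma lin_letter0 r : lin_letter r 0 =1 orig_letter r.
Proof. by move=> x; rewrite /lin_letter subn0. Qed.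

Section Split.
Variables (r r1 r2 : regex A).
Hypothesis atoms_r : atoms r = atoms r1 ++ atoms r2.

Lemma map_lin_letterl k al : matches (lin_from k r1) al ->
  map (lin_letter r k) al = map (lin_letter r1 k) al.
Proof.
move=> /matches_atoms H; apply/eq_in_map => x /H.
rewrite atoms_lin_from mem_iota /lin_letter /orig_letter atoms_r map_cat nth_cat size_map.
by move=> ?; have -> : x - k < size (atoms r1) by lia.
Qed.

Lemma map_lin_letterr k al : matches (lin_from (k + size (atoms r1)) r2) al ->
  map (lin_letter r k) al = map (lin_letter r2 (k + size (atoms r1))) al.
Proof.
move=> /matches_atoms H; apply/eq_in_map => x /H.
rewrite atoms_lin_from mem_iota /lin_letter /orig_letter atoms_r map_cat nth_cat size_map.
move=> ?; have -> : x - k < size (atoms r1) = false by lia.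
by congr nth; lia.
Qed.

End Split.

Lemma lin_from_complete r u k : matches r u ->
  exists2 al, matches (lin_from k r) al & map (lin_letter r k) al = map Some u.
Proof.
move=> H; elim: H k => /= [|a|r1 r2 w1 w2 _ IH1 _ IH2|r1 r2 w _ IH|r1 r2 w _ IH|r'
                          |r' w1 w2 _ IH1 _ IH2] k.
- by exists [::] => //; constructor.
- by exists [:: k]; [constructor | rewrite /= /lin_letter subnn].
- have [al1 H1 E1] := IH1 k; have [al2 H2 E2] := IH2 (k + size (atoms r1)).
  exists (al1 ++ al2); first by constructor.
  by rewrite !map_cat (map_lin_letterl (r := Cat r1 r2) erefl H1)
             (map_lin_letterr (r := Cat r1 r2) erefl H2) E1 E2.
- have [al1 H1 E1] := IH k; exists al1; first by constructor.
  by rewrite (map_lin_letterl (r := Alt r1 r2) erefl H1).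
- have [al1 H1 E1] := IH (k + size (atoms r1)); exists al1; first by apply: m_alt_r.
  by rewrite (map_lin_letterr (r := Alt r1 r2) erefl H1).
- by exists [::] => //; constructor.
- have [al1 H1 E1] := IH1 k; have [al2 H2 E2] := IH2 k.
  by exists (al1 ++ al2); [constructor | rewrite !map_cat E1 E2].
Qed.

Lemma lin_from_sound r k al u : matches (lin_from k r) al ->
  map (lin_letter r k) al = map Some u -> matches r u.
Proof.
move Er: (lin_from k r) => x H; elim: H r k Er u
  => [|a|r1 r2 w1 w2 H1 IH1 H2 IH2|r1 r2 w H IH|r1 r2 w H IH|r'|r' w1 w2 H1 IH1 H2 IH2]
     [] //=.
- by move=> k _ [|? ?] // _; constructor.
- move=> b k [<-] [|y [|? ?]] //; rewrite /lin_letter subnn => -[<-].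
  exact: m_atom.
- move=> r1' r2' k [E1 E2] u; rewrite -E1 in H1; rewrite -E2 in H2.
  rewrite map_cat (map_lin_letterl (r := Cat r1' r2') erefl H1)
                  (map_lin_letterr (r := Cat r1' r2') erefl H2).
  by case/cat_eq_map=> [u1 [u2 [-> F1 F2]]]; constructor; [exact: IH1 F1 | exact: IH2 F2].
- move=> r1' r2' k [E1 _] u; rewrite -E1 in H.
  rewrite (map_lin_letterl (r := Alt r1' r2') erefl H) => F.
  by apply: m_alt_l; exact: IH F.
- move=> r1' r2' k [_ E2] u; rewrite -E2 in H.
  rewrite (map_lin_letterr (r := Alt r1' r2') erefl H) => F.
  by apply: m_alt_r; exact: IH F.
- by move=> r1' k _ [|? ?] // _; constructor.
- move=> r1' k [E1] u; rewrite map_cat => /cat_eq_map [u1 [u2 [-> F1 F2]]].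
  by constructor; [exact: IH1 r1' k E1 u1 F1 | apply: (IH2 (Star r1') k) F2; rewrite /= E1].
Qed.

Lemma linearise_complete r u : matches r u ->
  exists2 al, matches (linearise r) al & map (orig_letter r) al = map Some u.
Proof.
by move/(lin_from_complete 0) => [al H E]; exists al; rewrite // -(eq_map (lin_letter0 r)).
Qed.

Lemma linearise_sound r al u : matches (linearise r) al ->
  map (orig_letter r) al = map Some u -> matches r u.
Proof. by rewrite -(eq_map (lin_letter0 r)); exact: lin_from_sound. Qed.

End Linearisation.

Section Walks.
Variables (Sigma : finType) (D : database Sigma).
Implicit Types (n : vertex D) (es : seq (edge D)) (al : seq nat) (f : nat -> option Sigma).

Lemma is_walk_from_cat n es1 es2 :
  is_walk_from n (es1 ++ es2) = is_walk_from n es1 && is_walk_from (walk_end n es1) es2.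
Proof. by elim: es1 n => [|e es1 IH] n //=; rewrite IH andbA. Qed.

Lemma walk_end_cat n es1 es2 : walk_end n (es1 ++ es2) = walk_end (walk_end n es1) es2.
Proof. by rewrite /walk_end map_cat last_cat. Qed.

(* [e :: q] is a closed walk from [src e], so it can be cut out. *)
Lemma is_walk_from_cut_loop n p e q r :
  is_walk_from n (p ++ e :: q ++ e :: r) -> is_walk_from n (p ++ e :: r).
Proof.
rewrite !is_walk_from_cat /= is_walk_from_cat /=.
by case/andP=> -> /and3P[-> _ /andP[_ ->]].
Qed.

Lemma walk_end_cut_loop n p e q r :
  walk_end n (p ++ e :: q ++ e :: r) = walk_end n (p ++ e :: r).
Proof. by rewrite !walk_end_cat; exact: walk_end_cat (tgt e) q (e :: r). Qed.

Definition fits_letter f (e : edge D) (alpha : nat) : bool :=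
  if f alpha is Some a then a \in lbl e else false.

Definition labels_fit f es al : bool := all2 (fits_letter f) es al.

Lemma labels_fit_size f es al : labels_fit f es al -> size es = size al.
Proof. by rewrite /labels_fit all2E => /andP[/eqP]. Qed.

Lemma labels_fit_unzip f (z : seq (edge D * nat)) :
  labels_fit f (unzip1 z) (unzip2 z) = all (fun p => fits_letter f p.1 p.2) z.
Proof. by rewrite /labels_fit all2E !size_map eqxx zip_unzip. Qed.

Lemma labels_fit_of_lbl f es u al :
  in_walk_lbl es u -> map f al = map Some u -> labels_fit f es al.
Proof.
elim: es u al => [|e es IH] [|a u] [|x al] //= /andP[lbl_a lbl_u] [fx E].
by rewrite /labels_fit /= {1}/fits_letter fx lbl_a; exact: IH lbl_u E.
Qed.

Lemma lbl_of_labels_fit f es al : labels_fit f es al ->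
  in_walk_lbl es (pmap f al) /\ map f al = map Some (pmap f al).
Proof.
elim: es al => [|e es IH] [|x al] //=; rewrite /fits_letter.
by case: (f x) => [a|] //= /andP[-> /IH[-> ->]].
Qed.

Lemma cut_repeated_pair f (r : regex nat) n (z : seq (edge D * nat)) :
  uniq (atoms r) -> ~~ uniq z -> is_walk_from n (unzip1 z) ->
  labels_fit f (unzip1 z) (unzip2 z) -> matches r (unzip2 z) ->
  exists2 z', size z' < size z &
    [/\ is_walk_from n (unzip1 z'), walk_end n (unzip1 z') = walk_end n (unzip1 z),
        labels_fit f (unzip1 z') (unzip2 z') & matches r (unzip2 z')].
Proof.
move=> Ur /not_uniq_split[z1 [[e a] [z2 [z3 ->]]]].
rewrite !labels_fit_unzip /unzip1 /unzip2 !map_cat /= !map_cat /= => walk_z fit_z lin_z.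
exists (z1 ++ (e, a) :: z3); first by rewrite !size_cat /= size_cat /=; lia.
rewrite labels_fit_unzip /unzip1 /unzip2 !map_cat /=; split.
- exact: is_walk_from_cut_loop walk_z.
- by rewrite walk_end_cut_loop.
- by move: fit_z; rewrite !all_cat /= all_cat /= => /and5P[-> -> _ _ ->].
- have lin_z' := lin_z; rewrite -cat_cons catA in lin_z'.
  exact: linear_matches_splice Ur lin_z lin_z'.
Qed.

Lemma walk_sem_of_labels_fit (R : regex Sigma) (A : automaton Sigma)
    (sub_lang : forall u, matches R u -> aut_lang A u) n es al :
  is_walk_from n es -> labels_fit (orig_letter R) es al -> matches (linearise R) al ->
  in_walk_sem A n es.
Proof.
move=> walk_es /lbl_of_labels_fit[lbl_es letters_al] lin_al.
split=> //; exists (pmap (orig_letter R) al); split=> //.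
exact/sub_lang/(linearise_sound lin_al letters_al).
Qed.

End Walks.

Theorem proposition29 (Sigma : finType) (D : database Sigma) (R : regex Sigma)
    (A : automaton Sigma)
    (hlang : forall u : seq Sigma, matches R u <-> aut_lang A u)
    (s t : vertex D) (n0 : vertex D) (es : seq (edge D))
    (hP : [/\ in_walk_sem A n0 es, n0 = s & walk_end n0 es = t])
    (hmin : forall (n1 : vertex D) (es' : seq (edge D)),
        [/\ in_walk_sem A n1 es', n1 = s & walk_end n1 es' = t] ->
        size es <= size es') :
  @in_BT_sem Sigma D R n0 es.
Proof.
have [[walk_es [u [lbl_u A_u]]] n0_s end_es] := hP.
have [al lin_al letters_al] := linearise_complete ((hlang u).2 A_u).
have fit_al : labels_fit (orig_letter R) es al := labels_fit_of_lbl lbl_u letters_al.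
have size_al := labels_fit_size fit_al.
exists al; split=> //; apply/negPn/negP => repeated.
have unzip_es : unzip1 (zip es al) = es by rewrite unzip1_zip ?size_al.
have unzip_al : unzip2 (zip es al) = al by rewrite unzip2_zip ?size_al.
have := cut_repeated_pair (f := orig_letter R) (n := n0) (uniq_atoms_linearise R) repeated.
rewrite unzip_es unzip_al => /(_ walk_es fit_al lin_al)[z' shorter [walk' end' fit' lin']].
have sem' := walk_sem_of_labels_fit (fun u => (hlang u).1) walk' fit' lin'.
have := hmin n0 (unzip1 z') (And3 sem' n0_s (etrans end' end_es)).
by move: shorter; rewrite size_map size1_zip ?size_al //; lia.
Qed.
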